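(* Let $0<A<1$, $\lambda_0=A-1$, $L>0$, $\sigma=2\pi/L$ and $c_0\ge2\sqrt{-\lambda_0}$. If $\mu_{max}>0$ is small enough, there exists $\kappa>0$ such that for all $(n,j)\in\mathbb{Z}\times\mathbb{N}$ and $0\le\mu<\mu_{max}$, $$|\operatorname{Re}a^\pm_{n,j,\mu}|\ge2\kappa,\quad |\operatorname{Re}b^-_{n,j,\mu}|\ge2\kappa,\quad\text{and}\quad |\operatorname{Re}b^+_{n,j,\mu}|\ge2\kappa\ \text{ whenever }\operatorname{Re}b^+_{n,j,\mu}<0.$$ Also, there exist $C_\kappa,\overline N,\overline J\ge0$ such that if $|n|\ge\overline N$ or $j\ge\overline J$, then for all $0\le\mu<\mu_{max}$, $$0<\frac{1}{|\operatorname{Re}a^\pm_{n,j,\mu}|-\kappa},\ \frac{1}{|\operatorname{Re}b^\pm_{n,j,\mu}|-\kappa}\le\frac{C_\kappa}{\sqrt{1+\mu n^2+j+|n|}}.$$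
   Context: $\lambda_j=-1+(2j+1)A$. With $\delta_{0j}$ the Kronecker symbol, $a^\pm_{n,j,\mu}=\frac12\Big(-2in\sigma-c_0\pm\sqrt{4\mu n^2\sigma^2+c_0^2+4in\sigma c_0+4[(1-\delta_{0j})\lambda_j-\lambda_0]}\Big)$ and $b^\pm_{n,j,\mu}=\frac12\Big(-2in\sigma-c_0\pm\sqrt{4\mu n^2\sigma^2+c_0^2+4in\sigma c_0+4\lambda_j}\Big)$, where for $z=re^{i\vartheta}$ with $r\ge0$, $\vartheta\in(-\pi,\pi]$, $\sqrt z:=\sqrt r e^{i\vartheta/2}$. *)

From Stdlib Require Import Reals ZArith.
From Coquelicot Require Import Coquelicot.
Open Scope R_scope.

(* Principal argument of z = x + i y, with values in (-pi, pi]
   (arg 0 := 0; irrelevant since the modulus is then 0). *)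
Definition carg (z : C) : R :=
  let x := fst z in let y := snd z in
  if Rlt_dec 0 x then atan (y / x)
  else if Rlt_dec x 0 then
    (if Rle_dec 0 y then atan (y / x) + PI else atan (y / x) - PI)
  else if Rlt_dec 0 y then PI / 2
  else if Rlt_dec y 0 then - (PI / 2)
  else 0.

Definition csqrt (z : C) : C :=
  (sqrt (Cmod z) * cos (carg z / 2), sqrt (Cmod z) * sin (carg z / 2)).

Definition lambda (A : R) (j : nat) : R := -1 + (2 * INR j + 1) * A.

Definition kron0 (j : nat) : R := if Nat.eqb j 0 then 1 else 0.

Definition ci : C := (0, 1).

(* a^{+/-}_{n,j,mu}; sgn = true for +, false for - *)
Definition a_pm (A sigma c0 : R) (sgn : bool) (n : Z) (j : nat) (mu : R) : C :=
  let nn := IZR n in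
  let D : C := Cplus (Cplus (RtoC (4 * mu * nn ^ 2 * sigma ^ 2 + c0 ^ 2))
                 (Cmult (RtoC (4 * nn * sigma * c0)) ci))
                 (RtoC (4 * ((1 - kron0 j) * lambda A j - lambda A 0))) in
  Cmult (RtoC (1/2))
    (Cplus (Cplus (Cmult (RtoC (-2 * nn * sigma)) ci) (RtoC (- c0)))
           (if sgn then csqrt D else Copp (csqrt D))).

Definition b_pm (A sigma c0 : R) (sgn : bool) (n : Z) (j : nat) (mu : R) : C :=
  let nn := IZR n in
  let D : C := Cplus (Cplus (RtoC (4 * mu * nn ^ 2 * sigma ^ 2 + c0 ^ 2))
                 (Cmult (RtoC (4 * nn * sigma * c0)) ci))
                 (RtoC (4 * lambda A j)) in
  Cmult (RtoC (1/2))
    (Cplus (Cplus (Cmult (RtoC (-2 * nn * sigma)) ci) (RtoC (- c0)))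
           (if sgn then csqrt D else Copp (csqrt D))).

From Stdlib Require Import Reals ZArith Lra Lia Psatz.
From Coquelicot Require Import Coquelicot.
Open Scope R_scope.

(* Each root is [(-c0 ± S) / 2] with [S = Re (sqrt D) >= 0], [S^2 = (|D| + Re D) / 2]
   and [D] the discriminant.  For [a^±], [Re D >= c0^2 + 4 min (1 - A, 2 A)], so [S]
   exceeds [c0] by a fixed amount; [|Re b^-| >= c0 / 2] since [S >= 0].  If
   [Re b^+ < 0] then [S < c0], and factorising [4 c0^4 - 4 c0^2 Re D - (Im D)^2]
   gives [c0 (c0 - S) >= -lambda_j - (1 + mu) n^2 sigma^2 > 0].  The quantity
   [-lambda_j - n^2 sigma^2] is positive for finitely many [(n, j)] only, hence
   bounded below by some [e > 0] there, and [mu <= e / 2] keeps the gap.  Finally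
   [S^2 >= (Re D + |Im D| / 2) / 2] grows linearly in [1 + mu n^2 + j + |n|], which
   gives the decay of [1 / (|Re| - kappa)]. *)

Lemma sqrt_sum_sq_factor (x y : R) : x <> 0 ->
  sqrt (x ^ 2 + y ^ 2) = Rabs x * sqrt (1 + (y / x)²).
Proof.
  intros Hx.
  assert (Hpos : 0 <= 1 + (y / x)²) by (pose proof (Rle_0_sqr (y / x)); lra).
  rewrite <- (sqrt_pow2 (Rabs x * sqrt (1 + (y / x)²))).
  2: { apply Rmult_le_pos; [apply Rabs_pos | apply sqrt_pos]. }
  f_equal.
  rewrite Rpow_mult_distr, pow2_abs, pow2_sqrt by exact Hpos.
  unfold Rsqr. field. exact Hx.
Qed.

Lemma Cmod_cos_carg (z : C) : Cmod z * cos (carg z) = Re z.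
Proof.
  destruct z as [x y]. unfold Cmod, carg, Re; simpl fst; simpl snd.
  assert (Hroot : x <> 0 -> 0 < sqrt (1 + (y / x)²)).
  { intros _. apply sqrt_lt_R0. pose proof (Rle_0_sqr (y / x)); lra. }
  destruct (Rlt_dec 0 x) as [Hx | Hx].
  - rewrite cos_atan, sqrt_sum_sq_factor, Rabs_right by lra.
    specialize (Hroot ltac:(lra)). field. lra.
  - destruct (Rlt_dec x 0) as [Hx' | Hx'].
    + specialize (Hroot ltac:(lra)).
      assert (Hshift : forall t, cos (t + PI) = - cos t /\ cos (t - PI) = - cos t).
      { intros t. rewrite neg_cos, cos_minus, cos_PI, sin_PI. split; ring. }
      destruct (Hshift (atan (y / x))) as [Hplus Hminus].
      destruct (Rle_dec 0 y); [rewrite Hplus | rewrite Hminus];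
        rewrite cos_atan, sqrt_sum_sq_factor, Rabs_left by lra; field; lra.
    + assert (x = 0) by lra. subst x.
      destruct (Rlt_dec 0 y); [|destruct (Rlt_dec y 0)].
      * rewrite cos_PI2. ring.
      * rewrite cos_neg, cos_PI2. ring.
      * assert (y = 0) by lra. subst y. rewrite cos_0.
        replace (0 ^ 2 + 0 ^ 2) with 0 by ring. rewrite sqrt_0. ring.
Qed.

Lemma carg_bound (z : C) : - PI <= carg z <= PI.
Proof.
  destruct z as [x y]. unfold carg; simpl fst; simpl snd.
  pose proof PI_RGT_0. pose proof (atan_bound (y / x)).
  destruct (Rlt_dec 0 x); [lra|].
  destruct (Rlt_dec x 0) as [Hx|]; [|destruct (Rlt_dec 0 y); [|destruct (Rlt_dec y 0)]; lra].
  assert (Hinv : / x < 0) by (apply Rinv_lt_0_compat; exact Hx).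
  destruct (Rle_dec 0 y).
  - assert (atan (y / x) <= 0).
    { rewrite <- atan_0. destruct (Req_dec y 0) as [-> | Hy].
      + unfold Rdiv. rewrite Rmult_0_l. lra.
      + left. apply atan_increasing. unfold Rdiv. nra. }
    lra.
  - assert (0 <= atan (y / x)).
    { rewrite <- atan_0. left. apply atan_increasing. unfold Rdiv. nra. }
    lra.
Qed.

Lemma Re_csqrt (z : C) : Re (csqrt z) = sqrt ((Cmod z + Re z) / 2).
Proof.
  unfold csqrt, Re at 1; simpl fst.
  rewrite <- Cmod_cos_carg.
  pose proof (carg_bound z) as Hbound. pose proof (Cmod_ge_0 z) as Hmod.
  set (t := carg z) in *.
  assert (Hcos : 0 <= cos (t / 2)) by (apply cos_ge_0; lra).
  assert (Hhalf : cos t = 2 * cos (t / 2) ^ 2 - 1).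
  { replace t with (2 * (t / 2)) at 1 by field. rewrite cos_2a_cos. ring. }
  rewrite <- (sqrt_pow2 (sqrt (Cmod z) * cos (t / 2))).
  2: { apply Rmult_le_pos; [apply sqrt_pos | exact Hcos]. }
  f_equal.
  rewrite Rpow_mult_distr, pow2_sqrt, Hhalf by exact Hmod. field.
Qed.

Definition re_sqrt (X Y : R) : R := sqrt ((sqrt (X ^ 2 + Y ^ 2) + X) / 2).

Lemma Rabs_le_sqrt_sum_sq x y : Rabs x <= sqrt (x ^ 2 + y ^ 2).
Proof.
  rewrite <- (sqrt_pow2 (Rabs x)) by apply Rabs_pos.
  apply sqrt_le_1_alt. rewrite pow2_abs. pose proof (pow2_ge_0 y). lra.
Qed.

Lemma re_sqrt_sq X Y : re_sqrt X Y ^ 2 = (sqrt (X ^ 2 + Y ^ 2) + X) / 2.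
Proof.
  apply pow2_sqrt.
  pose proof (Rabs_le_sqrt_sum_sq X Y). pose proof (Rle_abs (- X)).
  rewrite Rabs_Ropp in *. lra.
Qed.

Lemma re_sqrt_sq_ge X Y : X <= re_sqrt X Y ^ 2.
Proof.
  rewrite re_sqrt_sq.
  pose proof (Rabs_le_sqrt_sum_sq X Y). pose proof (Rle_abs X). lra.
Qed.

Lemma re_sqrt_sq_ge_abs X Y : 0 <= X -> Rabs Y / 2 <= re_sqrt X Y ^ 2.
Proof.
  intros HX. rewrite re_sqrt_sq.
  pose proof (Rabs_le_sqrt_sum_sq Y X) as HY. rewrite Rplus_comm in HY. lra.
Qed.

Lemma re_sqrt_im_sq X Y : Y ^ 2 = 4 * re_sqrt X Y ^ 2 * (re_sqrt X Y ^ 2 - X).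
Proof.
  rewrite re_sqrt_sq.
  assert (Hs : sqrt (X ^ 2 + Y ^ 2) ^ 2 = X ^ 2 + Y ^ 2).
  { apply pow2_sqrt. pose proof (pow2_ge_0 X). pose proof (pow2_ge_0 Y). lra. }
  nra.
Qed.

(* [re_sqrt_im_sq] factors [4 c^4 - 4 c^2 X - Y^2] as [4 (c - S) (c + S) (c^2 + S^2 - X)]. *)
Lemma re_sqrt_gap X Y c : 0 <= X -> 0 < c -> re_sqrt X Y < c ->
  0 < 4 * c ^ 4 - 4 * c ^ 2 * X - Y ^ 2 <= 16 * c ^ 3 * (c - re_sqrt X Y).
Proof.
  intros HX Hc HS.
  pose proof (re_sqrt_im_sq X Y) as HY. pose proof (re_sqrt_sq_ge X Y) as HXS.
  set (S := re_sqrt X Y) in *.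
  assert (HS0 : 0 <= S) by apply sqrt_pos.
  assert (E : 4 * c ^ 4 - 4 * c ^ 2 * X - Y ^ 2
              = 4 * (c - S) * ((c + S) * (c ^ 2 + S ^ 2 - X))).
  { rewrite HY. ring. }
  rewrite E.
  assert (Hlow : 0 < (c + S) * (c ^ 2 + S ^ 2 - X)).
  { apply Rmult_lt_0_compat; nra. }
  assert (Hup : (c + S) * (c ^ 2 + S ^ 2 - X) <= 4 * c ^ 3).
  { assert ((c + S) * (c ^ 2 + S ^ 2 - X) <= (c + S) * (c ^ 2 + S ^ 2)) by nra.
    assert (S ^ 2 <= c ^ 2) by nra. nra. }
  split; nra.
Qed.

Definition root_pm (nn sigma c0 mu l : R) (s : bool) : C :=
  let D : C := Cplus (Cplus (RtoC (4 * mu * nn ^ 2 * sigma ^ 2 + c0 ^ 2))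
                 (Cmult (RtoC (4 * nn * sigma * c0)) ci))
                 (RtoC (4 * l)) in
  Cmult (RtoC (1/2))
    (Cplus (Cplus (Cmult (RtoC (-2 * nn * sigma)) ci) (RtoC (- c0)))
           (if s then csqrt D else Copp (csqrt D))).

Lemma a_pm_root_pm A sigma c0 s n j mu :
  a_pm A sigma c0 s n j mu
  = root_pm (IZR n) sigma c0 mu ((1 - kron0 j) * lambda A j - lambda A 0) s.
Proof. reflexivity. Qed.

Lemma b_pm_root_pm A sigma c0 s n j mu :
  b_pm A sigma c0 s n j mu = root_pm (IZR n) sigma c0 mu (lambda A j) s.
Proof. reflexivity. Qed.

Definition disc_re (nn sigma c0 mu l : R) : R :=
  4 * mu * nn ^ 2 * sigma ^ 2 + c0 ^ 2 + 4 * l.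

Lemma disc_re_ge nn sigma c0 mu l : 0 <= mu -> c0 ^ 2 + 4 * l <= disc_re nn sigma c0 mu l.
Proof.
  intros Hmu. unfold disc_re.
  assert (0 <= mu * nn ^ 2 * sigma ^ 2).
  { apply Rmult_le_pos; [apply Rmult_le_pos|]; auto using pow2_ge_0. }
  lra.
Qed.

Lemma Re_root_pm nn sigma c0 mu l s :
  Re (root_pm nn sigma c0 mu l s)
  = (- c0 + (if s then 1 else -1) * re_sqrt (disc_re nn sigma c0 mu l) (4 * nn * sigma * c0)) / 2.
Proof.
  unfold root_pm; cbv zeta.
  set (D := Cplus (Cplus (RtoC _) _) (RtoC (4 * l))).
  assert (HD : D = (disc_re nn sigma c0 mu l, 4 * nn * sigma * c0)).
  { unfold D, disc_re, Cplus, Cmult, RtoC, ci; simpl. f_equal; ring. }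
  assert (Hre : Re (csqrt D) = re_sqrt (disc_re nn sigma c0 mu l) (4 * nn * sigma * c0)).
  { rewrite Re_csqrt, HD. reflexivity. }
  rewrite <- Hre. destruct (csqrt D) as [u v].
  destruct s; unfold Re, Cmult, Cplus, Copp, RtoC, ci; simpl; field.
Qed.

Lemma ex_pos_lb_finite (f : nat -> R) (N : nat) :
  exists e, 0 < e /\ forall n, (n < N)%nat -> 0 < f n -> e <= f n.
Proof.
  induction N as [|N [e [He Hlb]]].
  - exists 1. split; [lra | intros n Hn; lia].
  - destruct (Rlt_dec 0 (f N)) as [HfN | HfN].
    + exists (Rmin e (f N)). split; [apply Rmin_pos; lra|].
      intros n Hn Hfn. destruct (Nat.eq_dec n N) as [-> | Hne]; [apply Rmin_r|].
      apply Rle_trans with e; [apply Rmin_l | apply Hlb; [lia | exact Hfn]].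
    + exists e. split; [exact He|].
      intros n Hn Hfn. destruct (Nat.eq_dec n N) as [-> | Hne]; [lra|].
      apply Hlb; [lia | exact Hfn].
Qed.

Lemma ex_pos_lb_finite2 (f : nat -> nat -> R) (N J : nat) :
  exists e, 0 < e /\
    forall n j, (n < N)%nat -> (j < J)%nat -> 0 < f n j -> e <= f n j.
Proof.
  induction N as [|N [e [He Hlb]]].
  - exists 1. split; [lra | intros n j Hn; lia].
  - destruct (ex_pos_lb_finite (f N) J) as [e' [He' Hlb']].
    exists (Rmin e e'). split; [apply Rmin_pos; lra|].
    intros n j Hn Hj Hfnj. destruct (Nat.eq_dec n N) as [-> | Hne].
    + apply Rle_trans with e'; [apply Rmin_r | auto].
    + apply Rle_trans with e; [apply Rmin_l | apply Hlb; auto; lia].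
Qed.

Lemma IZR_sq_Zabs_nat (n : Z) : IZR n ^ 2 = INR (Z.abs_nat n) ^ 2.
Proof. rewrite INR_IZR_INZ, Nat2Z.inj_abs_nat, abs_IZR, pow2_abs. reflexivity. Qed.

(* Positivity forces [j < 1 / (2 A)] and [|n| < 1 / sigma]: finitely many pairs. *)
Lemma lambda_gap_lb (A sigma : R) : 0 < A -> 0 < sigma ->
  exists e, 0 < e /\ forall (n : Z) (j : nat),
    0 < - lambda A j - IZR n ^ 2 * sigma ^ 2 -> e <= - lambda A j - IZR n ^ 2 * sigma ^ 2.
Proof.
  intros HA Hsigma.
  destruct (INR_unbounded (1 / (2 * A))) as [J HJ].
  destruct (INR_unbounded (1 / sigma)) as [N HN].
  destruct (ex_pos_lb_finite2 (fun m j => - lambda A j - INR m ^ 2 * sigma ^ 2) N J)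
    as [e [He Hlb]].
  exists e. split; [exact He|]. intros n j Hpos.
  rewrite IZR_sq_Zabs_nat in *.
  set (m := Z.abs_nat n) in *.
  pose proof (pos_INR m). pose proof (pos_INR j).
  unfold lambda in Hpos.
  apply Hlb; [apply INR_lt | apply INR_lt | exact Hpos].
  - apply Rle_lt_trans with (1 / sigma); [|exact HN].
    apply Rmult_le_reg_r with sigma; [exact Hsigma|].
    unfold Rdiv. rewrite Rmult_assoc, Rinv_l by lra. nra.
  - apply Rle_lt_trans with (1 / (2 * A)); [|exact HJ].
    apply Rmult_le_reg_r with (2 * A); [lra|].
    unfold Rdiv. rewrite Rmult_assoc, Rinv_l by lra.
    pose proof (pow2_ge_0 (INR m)). pose proof (pow2_ge_0 sigma). nra.
Qed.

Lemma Rabs_half_shift_ge (c S : R) (s : bool) : 0 <= c -> 0 <= S ->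
  (S - c) / 2 <= Rabs ((- c + (if s then 1 else -1) * S) / 2).
Proof.
  intros Hc HS. destruct s.
  - replace ((- c + 1 * S) / 2) with ((S - c) / 2) by field. apply Rle_abs.
  - rewrite Rabs_left1 by lra. lra.
Qed.

Lemma inv_sub_le_of_ge (S c kap t r : R) :
  0 < r -> 2 * (c + 2 * kap) <= r -> r <= S -> (S - c) / 2 <= t ->
  0 < / (t - kap) /\ / (t - kap) <= 4 / r.
Proof.
  intros Hr Hrc HrS Ht.
  assert (Hgap : r / 4 <= t - kap) by lra.
  split.
  - apply Rinv_0_lt_compat. lra.
  - replace (4 / r) with (/ (r / 4)) by (field; lra).
    apply Rinv_le_contravar; lra.
Qed.

Section Gaps.

Variables A sigma c0 : R.
Hypothesis HA : 0 < A < 1.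
Hypothesis Hsigma : 0 < sigma.
Hypothesis Hc0 : 0 < c0.
Hypothesis Hc0A : 4 * (1 - A) <= c0 ^ 2.

Lemma shift_a_lb (j : nat) :
  Rmin (1 - A) (2 * A) <= (1 - kron0 j) * lambda A j - lambda A 0 /\
  2 * INR j * A <= (1 - kron0 j) * lambda A j - lambda A 0.
Proof.
  unfold lambda, kron0. destruct j as [|j]; simpl Nat.eqb.
  - pose proof (Rmin_l (1 - A) (2 * A)). simpl INR. lra.
  - pose proof (Rmin_r (1 - A) (2 * A)).
    assert (1 <= INR (S j)) by (apply (le_INR 1); lia).
    simpl (INR 0). nra.
Qed.

Lemma abs_Re_a_pm_ge s n j mu : 0 <= mu ->
  (sqrt (c0 ^ 2 + 4 * Rmin (1 - A) (2 * A)) - c0) / 2 <= Rabs (Re (a_pm A sigma c0 s n j mu)).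
Proof.
  intros Hmu. rewrite a_pm_root_pm, Re_root_pm.
  set (X := disc_re _ _ _ _ _). set (S := re_sqrt X _).
  assert (HS : 0 <= S) by apply sqrt_pos.
  eapply Rle_trans; [|apply Rabs_half_shift_ge; lra].
  assert (HX : c0 ^ 2 + 4 * Rmin (1 - A) (2 * A) <= X).
  { destruct (shift_a_lb j) as [Hm _].
    pose proof (disc_re_ge (IZR n) sigma c0 mu ((1 - kron0 j) * lambda A j - lambda A 0) Hmu)
      as Hdisc.
    fold X in Hdisc. lra. }
  assert (sqrt (c0 ^ 2 + 4 * Rmin (1 - A) (2 * A)) <= S).
  { rewrite <- (sqrt_pow2 S) by exact HS. apply sqrt_le_1_alt.
    pose proof (re_sqrt_sq_ge X (4 * IZR n * sigma * c0)) as HSX. fold S in HSX. lra. }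
  lra.
Qed.

Lemma abs_Re_b_minus_ge n j mu :
  c0 / 2 <= Rabs (Re (b_pm A sigma c0 false n j mu)).
Proof.
  rewrite b_pm_root_pm, Re_root_pm.
  set (S := re_sqrt _ _). assert (HS : 0 <= S) by apply sqrt_pos.
  rewrite Rabs_left1; lra.
Qed.

Lemma abs_Re_b_plus_ge e n j mu :
  (forall (n : Z) (j : nat), 0 < - lambda A j - IZR n ^ 2 * sigma ^ 2 ->
     e <= - lambda A j - IZR n ^ 2 * sigma ^ 2) ->
  0 <= mu <= e / 2 -> Re (b_pm A sigma c0 true n j mu) < 0 ->
  e / (4 * c0) <= Rabs (Re (b_pm A sigma c0 true n j mu)).
Proof.
  intros He Hmu. rewrite b_pm_root_pm, Re_root_pm. intros Hneg.
  set (nn := IZR n) in *.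
  set (X := disc_re nn sigma c0 mu (lambda A j)) in *.
  set (S := re_sqrt X _) in *.
  assert (HX : 0 <= X).
  { pose proof (disc_re_ge nn sigma c0 mu (lambda A j) ltac:(lra)) as Hdisc. fold X in Hdisc.
    unfold lambda in Hdisc. pose proof (pos_INR j). nra. }
  assert (HSc : S < c0) by lra.
  destruct (re_sqrt_gap X (4 * nn * sigma * c0) c0 HX Hc0 HSc) as [Hpos Hup].
  fold S in Hup.
  set (d := - lambda A j - nn ^ 2 * sigma ^ 2 - mu * nn ^ 2 * sigma ^ 2).
  assert (Hd : 4 * c0 ^ 4 - 4 * c0 ^ 2 * X - (4 * nn * sigma * c0) ^ 2 = 16 * c0 ^ 2 * d)
    by (unfold d, X, disc_re; ring).
  rewrite Hd in Hpos, Hup.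
  assert (Hmu_d : 0 <= mu * nn ^ 2 * sigma ^ 2).
  { apply Rmult_le_pos; [apply Rmult_le_pos|]; auto using pow2_ge_0; lra. }
  assert (Hv : 0 < - lambda A j - nn ^ 2 * sigma ^ 2) by (unfold d in Hpos; nra).
  specialize (He n j Hv). fold nn in He.
  assert (Hd_e : e / 2 <= d).
  { assert (nn ^ 2 * sigma ^ 2 <= 1) by (unfold lambda in Hv; pose proof (pos_INR j); nra).
    assert (mu * nn ^ 2 * sigma ^ 2 <= mu) by nra.
    unfold d. lra. }
  assert (Hd_S : d <= c0 * (c0 - S)).
  { apply Rmult_le_reg_l with (16 * c0 ^ 2); [nra|].
    replace (16 * c0 ^ 2 * (c0 * (c0 - S))) with (16 * c0 ^ 3 * (c0 - S)) by ring. lra. }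
  rewrite Rabs_left by lra.
  apply Rmult_le_reg_l with (4 * c0); [lra|].
  replace (4 * c0 * (e / (4 * c0))) with e by (field; lra).
  nra.
Qed.

Lemma uniform_gap : exists mu0 g, 0 < mu0 /\ 0 < g /\
  forall (n : Z) (j : nat) (mu : R), 0 <= mu <= mu0 ->
    (forall s, g <= Rabs (Re (a_pm A sigma c0 s n j mu))) /\
    g <= Rabs (Re (b_pm A sigma c0 false n j mu)) /\
    (Re (b_pm A sigma c0 true n j mu) < 0 -> g <= Rabs (Re (b_pm A sigma c0 true n j mu))).
Proof.
  destruct (lambda_gap_lb A sigma ltac:(lra) Hsigma) as [e [He Hlb]].
  set (ga := (sqrt (c0 ^ 2 + 4 * Rmin (1 - A) (2 * A)) - c0) / 2).
  assert (Hga : 0 < ga).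
  { assert (sqrt (c0 ^ 2) < sqrt (c0 ^ 2 + 4 * Rmin (1 - A) (2 * A))).
    { apply sqrt_lt_1_alt. pose proof (Rmin_pos (1 - A) (2 * A) ltac:(lra) ltac:(lra)).
      split; [apply pow2_ge_0 | lra]. }
    rewrite sqrt_pow2 in * by lra. unfold ga. lra. }
  exists (e / 2), (Rmin ga (Rmin (c0 / 2) (e / (4 * c0)))).
  split; [lra|]. split.
  { apply Rmin_pos; [lra | apply Rmin_pos; [lra|]].
    apply Rdiv_lt_0_compat; lra. }
  pose proof (Rmin_l ga (Rmin (c0 / 2) (e / (4 * c0)))).
  pose proof (Rmin_r ga (Rmin (c0 / 2) (e / (4 * c0)))).
  pose proof (Rmin_l (c0 / 2) (e / (4 * c0))). pose proof (Rmin_r (c0 / 2) (e / (4 * c0))).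
  intros n j mu Hmu. split; [|split].
  - intros s. pose proof (abs_Re_a_pm_ge s n j mu ltac:(lra)) as Ha. fold ga in Ha. lra.
  - pose proof (abs_Re_b_minus_ge n j mu). lra.
  - intros Hneg. pose proof (abs_Re_b_plus_ge e n j mu Hlb Hmu Hneg). lra.
Qed.

(* The smallest coefficient with which [mu n^2], [j] and [|n|] enter
   [(Re D + |Im D| / 2) / 2]. *)
Let k := Rmin (2 * sigma ^ 2) (Rmin (4 * A) (sigma * c0)).

Lemma k_pos : 0 < k.
Proof. unfold k. apply Rmin_pos; [|apply Rmin_pos]; nra. Qed.

Lemma weight_le_re_sqrt_sq nn mu J l :
  0 <= mu -> 0 <= J -> A - 1 <= l -> -1 + 2 * J * A <= l ->
  k * (mu * nn ^ 2 + J + Rabs nn) - 2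
  <= re_sqrt (disc_re nn sigma c0 mu l) (4 * nn * sigma * c0) ^ 2.
Proof.
  intros Hmu HJ Hl1 Hl2.
  set (X := disc_re nn sigma c0 mu l).
  assert (HX : 0 <= X).
  { pose proof (disc_re_ge nn sigma c0 mu l Hmu) as Hdisc. fold X in Hdisc. lra. }
  pose proof (re_sqrt_sq_ge X (4 * nn * sigma * c0)) as HSX.
  pose proof (re_sqrt_sq_ge_abs X (4 * nn * sigma * c0) HX) as HSY.
  replace (Rabs (4 * nn * sigma * c0)) with (4 * (sigma * c0) * Rabs nn) in HSY.
  2: { rewrite !Rabs_mult, (Rabs_pos_eq 4), (Rabs_pos_eq sigma), (Rabs_pos_eq c0); lra. }
  assert (Hmn : 0 <= mu * nn ^ 2) by (apply Rmult_le_pos; [lra | apply pow2_ge_0]).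
  pose proof (Rabs_pos nn).
  assert (k * (mu * nn ^ 2) <= 2 * sigma ^ 2 * (mu * nn ^ 2))
    by (apply Rmult_le_compat_r; [lra | apply Rmin_l]).
  assert (k * J <= 4 * A * J)
    by (apply Rmult_le_compat_r; [lra | eapply Rle_trans; [apply Rmin_r | apply Rmin_l]]).
  assert (k * Rabs nn <= sigma * c0 * Rabs nn)
    by (apply Rmult_le_compat_r; [lra | eapply Rle_trans; [apply Rmin_r | apply Rmin_r]]).
  assert (HXw : 4 * sigma ^ 2 * (mu * nn ^ 2) + 8 * J * A - 4 <= X).
  { unfold X, disc_re. pose proof (pow2_ge_0 c0). nra. }
  nra.
Qed.

Lemma inv_abs_Re_root_pm_le kap nn mu J l s :
  0 <= kap -> 0 <= mu -> 0 <= J -> A - 1 <= l -> -1 + 2 * J * A <= l ->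
  (2 * k + 4 + 8 * (c0 + 2 * kap) ^ 2) / k <= 1 + mu * nn ^ 2 + J + Rabs nn ->
  0 < / (Rabs (Re (root_pm nn sigma c0 mu l s)) - kap) /\
  / (Rabs (Re (root_pm nn sigma c0 mu l s)) - kap)
    <= 4 / sqrt (k / 2) / sqrt (1 + mu * nn ^ 2 + J + Rabs nn).
Proof.
  intros Hkap Hmu HJ Hl1 Hl2 HQ.
  pose proof k_pos as Hk.
  set (Q := 1 + mu * nn ^ 2 + J + Rabs nn) in *.
  assert (HkQ : 2 * k + 4 + 8 * (c0 + 2 * kap) ^ 2 <= k * Q).
  { apply Rmult_le_compat_l with (r := k) in HQ; [|lra].
    replace (k * ((2 * k + 4 + 8 * (c0 + 2 * kap) ^ 2) / k))
      with (2 * k + 4 + 8 * (c0 + 2 * kap) ^ 2) in HQ by (field; lra).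
    exact HQ. }
  pose proof (weight_le_re_sqrt_sq nn mu J l Hmu HJ Hl1 Hl2) as Hw.
  set (S := re_sqrt _ _) in Hw.
  assert (HS : 0 <= S) by apply sqrt_pos.
  assert (HQ0 : 0 < Q) by (pose proof (pow2_ge_0 (c0 + 2 * kap)); nra).
  set (r := sqrt (k / 2 * Q)).
  assert (Hr : 0 < r) by (apply sqrt_lt_R0; nra).
  assert (HrS : r <= S).
  { unfold r. rewrite <- (sqrt_pow2 S) by exact HS. apply sqrt_le_1_alt.
    replace (k * (mu * nn ^ 2 + J + Rabs nn)) with (k * Q - k) in Hw by (unfold Q; ring).
    pose proof (pow2_ge_0 (c0 + 2 * kap)). lra. }
  assert (Hrc : 2 * (c0 + 2 * kap) <= r).
  { unfold r. rewrite <- (sqrt_pow2 (2 * (c0 + 2 * kap))) by lra.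
    apply sqrt_le_1_alt. pose proof (pow2_ge_0 (c0 + 2 * kap)). nra. }
  replace (4 / sqrt (k / 2) / sqrt Q) with (4 / r).
  2: { unfold r. rewrite sqrt_mult by lra. field.
       split; apply Rgt_not_eq, sqrt_lt_R0; lra. }
  apply (inv_sub_le_of_ge S c0); try lra.
  rewrite Re_root_pm. apply Rabs_half_shift_ge; [lra | apply sqrt_pos].
Qed.

Lemma tail_bounds kap : 0 <= kap -> exists C Q0, 0 <= C /\ 0 <= Q0 /\
  forall (n : Z) (j : nat) (mu : R) (s : bool), 0 <= mu ->
    Q0 <= 1 + mu * IZR n ^ 2 + INR j + Rabs (IZR n) ->
    let bound := C / sqrt (1 + mu * IZR n ^ 2 + INR j + Rabs (IZR n)) in
    (0 < / (Rabs (Re (a_pm A sigma c0 s n j mu)) - kap) /\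
     / (Rabs (Re (a_pm A sigma c0 s n j mu)) - kap) <= bound) /\
    (0 < / (Rabs (Re (b_pm A sigma c0 s n j mu)) - kap) /\
     / (Rabs (Re (b_pm A sigma c0 s n j mu)) - kap) <= bound).
Proof.
  intros Hkap. pose proof k_pos as Hk.
  exists (4 / sqrt (k / 2)), ((2 * k + 4 + 8 * (c0 + 2 * kap) ^ 2) / k).
  split; [apply Rdiv_le_0_compat; [lra | apply sqrt_lt_R0; lra]|].
  split; [apply Rdiv_le_0_compat; [pose proof (pow2_ge_0 (c0 + 2 * kap)); lra | lra]|].
  intros n j mu s Hmu HQ. pose proof (pos_INR j) as Hj.
  rewrite a_pm_root_pm, b_pm_root_pm. split.
  - destruct (shift_a_lb j) as [Hm HjA].
    pose proof (Rmin_pos (1 - A) (2 * A) ltac:(lra) ltac:(lra)).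
    apply inv_abs_Re_root_pm_le; lra.
  - apply inv_abs_Re_root_pm_le; unfold lambda; nra.
Qed.

End Gaps.

Theorem mainTheorem6 :
  forall (A L c0 : R),
    0 < A < 1 -> 0 < L ->
    let lambda0 := A - 1 in
    let sigma := 2 * PI / L in
    2 * sqrt (- lambda0) <= c0 ->
    exists mu0 : R, 0 < mu0 /\
    forall mu_max : R, 0 < mu_max <= mu0 ->
    exists kappa : R, 0 < kappa /\
      (forall (n : Z) (j : nat) (mu : R), 0 <= mu < mu_max ->
         (forall s : bool, 2 * kappa <= Rabs (Re (a_pm A sigma c0 s n j mu))) /\
         2 * kappa <= Rabs (Re (b_pm A sigma c0 false n j mu)) /\
         (Re (b_pm A sigma c0 true n j mu) < 0 ->
            2 * kappa <= Rabs (Re (b_pm A sigma c0 true n j mu)))) /\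
      (exists C_kappa Nbar Jbar : R, 0 <= C_kappa /\ 0 <= Nbar /\ 0 <= Jbar /\
         forall (n : Z) (j : nat),
           (Nbar <= Rabs (IZR n) \/ Jbar <= INR j) ->
           forall mu : R, 0 <= mu < mu_max ->
           forall s : bool,
             let bound := C_kappa / sqrt (1 + mu * IZR n ^ 2 + INR j + Rabs (IZR n)) in
             (0 < / (Rabs (Re (a_pm A sigma c0 s n j mu)) - kappa) /\
              / (Rabs (Re (a_pm A sigma c0 s n j mu)) - kappa) <= bound) /\
             (0 < / (Rabs (Re (b_pm A sigma c0 s n j mu)) - kappa) /\
              / (Rabs (Re (b_pm A sigma c0 s n j mu)) - kappa) <= bound)).
Proof.
  intros A L c0 HA HL lambda0 sigma Hc0.
  assert (Hsigma : 0 < sigma) by (apply Rdiv_lt_0_compat; pose proof PI_RGT_0; lra).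
  assert (Hroot : 0 < sqrt (- lambda0)) by (apply sqrt_lt_R0; unfold lambda0; lra).
  assert (Hc0A : 4 * (1 - A) <= c0 ^ 2).
  { pose proof (pow2_sqrt (- lambda0) ltac:(unfold lambda0; lra)). unfold lambda0 in *. nra. }
  clearbody sigma.
  destruct (uniform_gap A sigma c0 HA Hsigma ltac:(lra) Hc0A) as [mu0 [g [Hmu0 [Hg Hgap]]]].
  exists mu0. split; [exact Hmu0|]. intros mu_max Hmax.
  exists (g / 2). split; [lra|]. split.
  - intros n j mu Hmu. replace (2 * (g / 2)) with g by field. apply Hgap. lra.
  - destruct (tail_bounds A sigma c0 HA Hsigma ltac:(lra) Hc0A (g / 2) ltac:(lra))
      as [C [Q0 [HC [HQ0 Htail]]]].
    exists C, Q0, Q0. split; [exact HC | split; [exact HQ0 | split; [exact HQ0|]]].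
    intros n j Hnj mu Hmu s. apply Htail; [lra|].
    pose proof (pos_INR j). pose proof (Rabs_pos (IZR n)).
    assert (0 <= mu * IZR n ^ 2) by (apply Rmult_le_pos; [lra | apply pow2_ge_0]).
    destruct Hnj; lra.
Qed.
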